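(* Let $\Delta$ be a finite abstract simplicial complex of dimension $d\ge0$ and $\Delta^{(k)}$ its $k$-fold iterated barycentric subdivision. For each $0\le i\le d$ there are rational numbers $C_{j,i}$ ($0\le j\le d-i$), independent of $k$, such that for all $k\ge0$ $$f^{\Delta^{(k)}}_i=\sum_{j=0}^{d-i}C_{j,i}\,(d+1-j)!^k,$$ and $C_{0,i}=f^\Delta_dF_{i,d}$. Consequently $f^{\Delta^{(k)}}_i=f^\Delta_dF_{i,d}(d+1)!^k+O(d!^k)$ as $k\to\infty$.
   Context: An abstract simplicial complex $\Delta$ on a finite set is a family of subsets closed under taking subsets (the empty set included); a $d$-simplex is a member of cardinality $d+1$, and $\dim\Delta$ is the largest such $d$. $f^\Delta_i$ denotes the number of $i$-simplices. The barycentric subdivision $\Delta'$ is the complex consisting of $\emptyset$ together with all sets $\{\sigma_0,\dots,\sigma_n\}$ ($n\ge0$) of nonempty simplices of $\Delta$ with $\sigma_0\subsetneq\cdots\subsetneq\sigma_n$; $\Delta^{(0)}=\Delta$, $\Delta^{(k+1)}=(\Delta^{(k)})'$. For integers $i,d\ge -1$ define $f_{-1,-1}=1$, $f_{-1,d}=0$ for $d\ge0$, $f_{i,-1}=0$ for $i\ge0$, and $f_{i,d}=(i+1)!\,S(d+1,i+1)$ for $i,d\ge0$ ($S$ = Stirling numbers of the second kind). For $d\ge0$ define $F_{d,d}=1$ and recursively for $-1\le i\le d-1$, $F_{i,d}=\frac{1}{(d+1)!-(i+1)!}\sum_{j=i+1}^{d}f_{i,j}F_{j,d}$. *)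

From HB Require Import structures.
From mathcomp Require Import all_boot all_order all_algebra.
Set Implicit Arguments. Unset Strict Implicit. Unset Printing Implicit Defensive.
Import Order.TTheory GRing.Theory Num.Theory.

Definition is_complex (T : finType) (D : {set {set T}}) : bool :=
  (set0 \in D) && [forall s in D, forall t : {set T}, (t \subset s) ==> (t \in D)].

Definition fnum (T : finType) (D : {set {set T}}) (i : nat) : nat :=
  #|[set s in D | #|s| == i.+1]|.

Definition complex_dim (T : finType) (D : {set {set T}}) (d : nat) : bool :=
  [exists s in D, #|s| == d.+1] && [forall s in D, #|s| <= d.+1].

(* barycentric subdivision: the empty set together with all nonempty chains
   s_0 ⊊ ... ⊊ s_n of nonempty simplices; equivalently all sets of nonempty
   simplices that are totally ordered by inclusion (the empty set of simplices
   is the empty simplex of D'). *)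
Definition bary (T : finType) (D : {set {set T}}) : {set {set {set T}}} :=
  [set c : {set {set T}} | (c \subset D :\ set0) &&
     [forall s in c, forall t in c, (s \subset t) || (t \subset s)]].

(* vertex type of the k-th iterated subdivision *)
Fixpoint itset (T : finType) (k : nat) : finType :=
  if k is k'.+1 then ({set itset T k'} : finType) else T.

Fixpoint sd (T : finType) (D : {set {set T}}) (k : nat) : {set {set itset T k}} :=
  match k return {set {set itset T k}} with
  | 0 => D
  | k'.+1 => bary (sd D k')
  end.

Fixpoint stirling2 (n k : nat) : nat :=
  match n, k with
  | 0, 0 => 1
  | 0, _.+1 => 0
  | _.+1, 0 => 0
  | n'.+1, k'.+1 => k'.+1 * stirling2 n' k'.+1 + stirling2 n' k'
  end.

Definition fid (i d : nat) : nat := (i.+1)`! * stirling2 d.+1 i.+1.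

Local Open Scope ring_scope.

(* Ftab n d = [:: F_{d-n,d}; F_{d-n+1,d}; ...; F_{d,d}]  (for n <= d) *)
Fixpoint Ftab (n d : nat) : seq rat :=
  match n with
  | 0 => [:: 1]
  | n'.+1 =>
      let s := Ftab n' d in
      let i := (d - n'.+1)%N in
      ((((d.+1)`!)%:R - ((i.+1)`!)%:R)^-1 *
        \sum_(m < n'.+1) (fid i (i.+1 + m)%N)%:R * nth 0 s m) :: s
  end.

Definition Fcoef (i d : nat) : rat := head 0 (Ftab (d - i) d).

From HB Require Import structures.
From mathcomp Require Import all_boot all_order all_algebra.
From mathcomp Require Import zify ring.
Import Order.TTheory GRing.Theory Num.Theory.
Set Implicit Arguments. Unset Strict Implicit. Unset Printing Implicit Defensive.

(* A simplex of the subdivision is a chain s_0 ⊊ ... ⊊ s_i of nonempty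
   simplices; grouped by their top s_i, the chains below an m-simplex are
   counted by (i+1)! S(m+1, i+1) = f_{i,m}, so the face vector obeys
   f(Δ') = A f(Δ) with A upper triangular with diagonal (i+1)!.  Solving
   f(Δ^(k+1)) = A f(Δ^(k)) row by row from i = d downwards writes f_i(Δ^(k))
   as a combination of the powers (d+1-j)!^k, j <= d-i, and the coefficient of
   (d+1)!^k satisfies exactly the recursion defining F_{i,d}. *)

Lemma stirling2_small n k : n < k -> stirling2 n k = 0.
Proof.
elim: n k => [|n IH] [|k] //= lt_nk.
by rewrite !IH ?muln0 // ltnW.
Qed.

Lemma stirling2_diag n : stirling2 n n = 1.
Proof. by elim: n => [|n IH] //=; rewrite stirling2_small // muln0 IH. Qed.

Lemma stirling2_1 n : stirling2 n.+1 1 = 1.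
Proof. by elim: n => [|n IH] //; rewrite -[LHS]/(1 * stirling2 n.+1 1 + 0) IH. Qed.

Lemma sum_binS_pascal n (F : nat -> nat) :
  \sum_(m < n.+2) 'C(n.+1, m) * F m = \sum_(m < n.+1) 'C(n, m) * (F m + F m.+1).
Proof.
rewrite big_ord_recl bin0 mul1n.
under eq_bigr => m _ do rewrite binS mulnDl.
rewrite big_split /= addnA.
have -> : F 0 + \sum_(m < n.+1) 'C(n, m.+1) * F m.+1 = \sum_(m < n.+1) 'C(n, m) * F m.
  rewrite -[F 0]mul1n -(bin0 n) -(big_ord_recl n.+1 (fun m => 'C(n, m) * F m)).
  by rewrite big_ord_recr /= bin_small ?mul0n ?addn0.
by rewrite -big_split /=; apply: eq_bigr => m _; rewrite mulnDr.
Qed.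

Lemma stirling2S_binomial n k :
  stirling2 n.+1 k.+1 = \sum_(m < n.+1) 'C(n, m) * stirling2 m k.
Proof.
elim: n k => [|n IH] k.
  by rewrite big_ord1 bin0 mul1n; case: k => [|k] //=; rewrite muln0.
rewrite (sum_binS_pascal n (stirling2^~ k)).
case: k => [|k].
  rewrite -[LHS]/(1 * stirling2 n.+1 1 + 0) mul1n addn0 IH.
  by apply: eq_bigr => m _; rewrite addn0.
rewrite -[LHS]/(k.+2 * stirling2 n.+1 k.+2 + stirling2 n.+1 k.+1) !IH.
rewrite big_distrr -big_split /=; apply: eq_bigr => m _ /=; nia.
Qed.

Lemma stirling2_binomial n k :
  k.+1 * stirling2 n k.+1 = \sum_(m < n) 'C(n, m) * stirling2 m k.
Proof.
case: n => [|n]; first by rewrite big_ord0 /= muln0.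
have := stirling2S_binomial n.+1 k.
rewrite big_ord_recr /= binn mul1n; exact: addIn.
Qed.

Lemma sum_by_value (U : finType) (P : pred U) (g : U -> nat) (N : nat) (F : nat -> nat) :
  (forall t, P t -> g t < N) ->
  \sum_(t | P t) F (g t) = \sum_(m < N) #|[set t | P t & g t == m]| * F m.
Proof.
move=> gN.
transitivity (\sum_(t | P t) \sum_(m < N | m == g t :> nat) F m).
  by apply: eq_bigr => t Pt; rewrite big_ord1_eq gN.
rewrite (exchange_big_dep xpredT) //=; apply: eq_bigr => m _.
rewrite (eq_bigr (fun _ => F m)) => [|t /andP [_ /eqP ->] //].
by rewrite sum_nat_const; congr (_ * _); apply: eq_card => t; rewrite !inE eq_sym.
Qed.

Section Chains.
Variable T : finType.
Implicit Types (s t u : {set T}) (c : {set {set T}}).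

Definition is_chain c := [forall s in c, forall t in c, (s \subset t) || (t \subset s)].

Definition is_top s c := (s \in c) && [forall u in c, u \subset s].

Definition top_chains s n :=
  [set c | [&& is_chain c, set0 \notin c, is_top s c & #|c| == n]].

Definition chains_below s n :=
  [set c | [&& is_chain c, set0 \notin c, s \notin c,
              [forall u in c, u \subset s] & #|c| == n]].

Lemma is_chainP c :
  reflect (forall u v, u \in c -> v \in c -> (u \subset v) || (v \subset u)) (is_chain c).
Proof.
apply: (iffP forall_inP) => [ch u v uc | ch u uc].
  by move: (ch u uc) => /forall_inP; apply.
by apply/forall_inP => v; apply: ch.
Qed.

Lemma is_topP s c : reflect (s \in c /\ forall u, u \in c -> u \subset s) (is_top s c).
Proof. by apply: (iffP andP) => -[sc /forall_inP]; split. Qed.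

Lemma is_chain_sub c c' : c' \subset c -> is_chain c -> is_chain c'.
Proof. by move=> /subsetP sc /is_chainP ch; apply/is_chainP => u v /sc uc /sc; apply: ch. Qed.

Lemma chain_top_exists c : is_chain c -> c != set0 -> exists s, is_top s c.
Proof.
move=> /is_chainP ch /set0Pn [u0 u0c].
have [s sc smax] := arg_maxnP (fun u => #|u|) u0c.
exists s; apply/is_topP; split => // u uc.
case/orP: (ch u s uc sc) => // su.
by have /eqP -> : s == u by rewrite eqEcard su /=; apply: smax.
Qed.

Lemma is_top_inj s t c : is_top s c -> is_top t c -> s = t.
Proof.
by move=> /is_topP [sc Hs] /is_topP [tc Ht]; apply/eqP; rewrite eqEsubset Ht ?Hs.
Qed.

Lemma card_by_top (X : {set {set {set T}}}) :
  (forall c, c \in X -> is_chain c /\ c != set0) ->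
  #|X| = \sum_s #|[set c in X | is_top s c]|.
Proof.
move=> chX; transitivity (\sum_(c in X) \sum_s (is_top s c : nat)).
  rewrite -sum1_card; apply: eq_bigr => c cX.
  have [ch c0] := chX c cX; have [s st] := chain_top_exists ch c0.
  rewrite (bigD1 s) //= st big1 // => t ts.
  by case tt: (is_top t c) => //; case/eqP: ts; apply: is_top_inj tt st.
rewrite exchange_big; apply: eq_bigr => s _.
rewrite -sum1_card big_mkcond [RHS]big_mkcond /=; apply: eq_bigr => c _.
by rewrite inE; case: (c \in X); case: (is_top s c).
Qed.

(* Removing the top [s] is a bijection onto the chains strictly below [s]. *)
Lemma card_top_chainsSS s n : #|top_chains s n.+2| = #|chains_below s n.+1|.
Proof.
have -> : top_chains s n.+2 = [set s |: c | c in chains_below s n.+1].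
  apply/setP => c; apply/idP/imsetP.
    rewrite inE => /and4P [ch c0 /is_topP [sc Hs] /eqP cc].
    exists (c :\ s); last by rewrite setD1K.
    rewrite inE (is_chain_sub (subD1set c s) ch) !inE eqxx (negbTE c0) andbF /=.
    move: cc; rewrite (cardsD1 s c) sc add1n => -[->]; rewrite eqxx andbT.
    by apply/forall_inP => u; rewrite !inE => /andP [_ /Hs].
  case=> c'; rewrite inE => /and5P [ch c0 sc' /forall_inP Hs /eqP cc] ->.
  have s0 : s != set0.
    have /set0Pn [u uc] : c' != set0 by apply/eqP => e; move: cc; rewrite e cards0.
    by apply: contraNneq c0 => e; move: (Hs u uc); rewrite e subset0 => /eqP <-.
  rewrite inE; apply/and4P; split.
  - apply/is_chainP => u v; rewrite !inE => /predU1P [->|uc] /predU1P [->|vc].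
    + by rewrite subxx.
    + by rewrite Hs ?orbT.
    + by rewrite Hs.
    + exact: (is_chainP _ ch).
  - by rewrite !inE negb_or eq_sym s0.
  - apply/is_topP; split; first by rewrite !inE eqxx.
    by move=> u; rewrite !inE => /predU1P [->|/Hs].
  - by rewrite cardsU1 sc' cc.
apply: card_in_imset => c1 c2; rewrite !inE => /and5P [_ _ s1 _ _] /and5P [_ _ s2 _ _] e.
by rewrite -(setU1K s1) -(setU1K s2) e.
Qed.

Lemma card_top_chains1 s : #|top_chains s 1| = (s != set0).
Proof.
have [->|s0] := eqVneq s set0.
  apply/eqP; rewrite cards_eq0; apply/eqP/setP => c; rewrite !inE.
  by apply/negP => /and4P [_ c0 /is_topP [sc _] _]; rewrite sc in c0.
have -> : top_chains s 1 = [set [set s]]; last by rewrite cards1.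
apply/setP => c; rewrite !inE; apply/idP/eqP.
  by case/and4P => _ _ /is_topP [sc _] /cards1P [x e]; move: sc; rewrite e inE => /eqP ->.
move=> ->; rewrite cards1 eqxx andbT; apply/and3P; split.
- by apply/is_chainP => u v; rewrite !inE => /eqP -> /eqP ->; rewrite subxx.
- by rewrite inE eq_sym.
- by apply/is_topP; split; [rewrite inE | move=> u; rewrite inE => /eqP ->].
Qed.

Lemma chains_below_top s t n : t \proper s ->
  [set c in chains_below s n | is_top t c] = top_chains t n.
Proof.
move=> ts; apply/setP => c; rewrite !inE; apply/idP/idP.
  by case/andP => /and5P [-> -> _ _ ->] ->.
case/and4P => ch c0 /[dup] tt /is_topP [tc Ht] cc; rewrite ch c0 tt cc !andbT /=.
apply/andP; split; first by apply: contraL ts => /Ht st; rewrite properE st andbF.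
by apply/forall_inP => u /Ht ut; apply: subset_trans ut (proper_sub ts).
Qed.

Lemma card_top_chains s i : #|top_chains s i.+1| = (i.+1)`! * stirling2 #|s| i.+1.
Proof.
elim: i s => [|i IH] s.
  by rewrite card_top_chains1 -card_gt0; case: #|s| => [|n]; rewrite ?stirling2_1.
rewrite card_top_chainsSS (card_by_top (X := chains_below s i.+1)); last first.
  move=> c; rewrite inE => /and5P [ch _ _ _ /eqP cc]; split => //.
  by apply/eqP => e; move: cc; rewrite e cards0.
rewrite (bigID (fun t => t \proper s)) /= [X in _ + X]big1 ?addn0; last first.
  move=> t ts; apply/eqP; rewrite cards_eq0; apply/eqP/setP => c; rewrite !inE.
  apply/negP => /andP [/and5P [_ _ sc /forall_inP Hs _] /is_topP [tc _]].
  by move: ts; rewrite properEneq Hs // andbT negbK => /eqP e; rewrite -e tc in sc.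
rewrite (eq_bigr (fun t => (i.+1)`! * stirling2 #|t| i.+1)); last first.
  by move=> t ts; rewrite chains_below_top.
rewrite (sum_by_value (g := fun t => #|t|) (N := #|s|) (fun m => (i.+1)`! * stirling2 m i.+1));
  last by move=> t; apply: proper_card.
rewrite (factS i.+1) [(i.+2 * _)%N]mulnC -mulnA stirling2_binomial big_distrr /=.
apply: eq_bigr => m _; rewrite mulnCA -cards_draws; congr (_ * (_ * _)).
apply: eq_card => t; rewrite !inE properEcard.
by case: (eqVneq #|t| m) => [->|]; rewrite ?ltn_ord ?andbF ?andbT.
Qed.

End Chains.

Definition dim_le (T : finType) (D : {set {set T}}) (d : nat) : bool :=
  [forall s in D, #|s| <= d.+1].

Section Subdivision.
Variables (T : finType) (D : {set {set T}}).
Hypothesis cD : is_complex D.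
Implicit Types s t : {set T}.

Lemma complex_sub s t : s \in D -> t \subset s -> t \in D.
Proof. by case/andP: cD => _ /forall_inP sub /sub /forallP /(_ t) /implyP. Qed.

Lemma fnum_bary_by_top i :
  fnum (bary D) i = \sum_(s | (s \in D) && (s != set0)) #|top_chains s i.+1|.
Proof.
rewrite /fnum (card_by_top (X := [set c in bary D | #|c| == i.+1])); last first.
  move=> c; rewrite !inE => /andP [/andP [_ ch] /eqP cc]; split => //.
  by apply/eqP => c0; move: cc; rewrite c0 cards0.
rewrite (bigID (fun s => (s \in D) && (s != set0))) /= [X in _ + X]big1 ?addn0.
  apply: eq_bigr => s /andP [sD s0]; apply: eq_card => c; rewrite !inE.
  apply/idP/idP.
    case/andP => /andP [/andP [cs ch] cc] st; rewrite /is_chain ch st cc /= andbT.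
    by apply: contraL cs => c0; apply/subsetPn; exists set0; rewrite // !inE eqxx.
  case/and4P => ch c0 /[dup] st /is_topP [_ Hs] ->; rewrite -/(is_chain c) ch st !andbT.
  apply/subsetP => u uc; rewrite !inE (complex_sub sD (Hs u uc)) andbT.
  by apply: contraNneq c0 => <-.
move=> s sDs; apply/eqP; rewrite cards_eq0; apply/eqP/setP => c; rewrite !inE.
apply/negP => /andP [/andP [/andP [/subsetP cs _] _] /is_topP [/cs]].
by rewrite !inE => /andP [sD s0]; rewrite sD s0 in sDs.
Qed.

Lemma fnum_bary d i : dim_le D d ->
  fnum (bary D) i = \sum_(m < d.+1) fid i m * fnum D m.
Proof.
move=> /forall_inP dimD.
rewrite fnum_bary_by_top (eq_bigr (fun s => fid i #|s|.-1)); last first.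
  by move=> s /andP [_ s0]; rewrite card_top_chains /fid prednK // card_gt0.
rewrite (sum_by_value (g := fun s => #|s|.-1) (N := d.+1) (fid i)); last first.
  by move=> s /andP [/dimD]; lia.
apply: eq_bigr => m _; rewrite mulnC; congr (_ * _); apply: eq_card => s.
by rewrite !inE -card_gt0; case: (s \in D) => //=; case: #|s|.
Qed.

Lemma bary_complex : is_complex (bary D).
Proof.
apply/andP; split; first by rewrite inE sub0set; apply/forall_inP => u; rewrite in_set0.
apply/forall_inP => c; rewrite inE => /andP [cD' ch].
apply/forallP => c'; apply/implyP => sc; rewrite inE (subset_trans sc cD') /=.
exact: (is_chain_sub sc ch).
Qed.

(* A chain with more than d+1 members would be an (#|c|-1)-simplex, but
   [stirling2 (m+1) #|c| = 0] kills every term of [fnum_bary]. *)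
Lemma bary_dim_le d : dim_le D d -> dim_le (bary D) d.
Proof.
move=> dimD; apply/forall_inP => c cB; rewrite leqNgt; apply/negP => big.
have : 0 < fnum (bary D) #|c|.-1.
  rewrite /fnum card_gt0; apply/set0Pn; exists c; rewrite inE cB /= prednK //.
  exact: leq_ltn_trans big.
rewrite (fnum_bary _ dimD) big1 // => m _.
by rewrite /fid stirling2_small ?muln0 ?mul0n //; have := ltn_ord m; lia.
Qed.

End Subdivision.

Lemma fnum_sdS (T : finType) (D : {set {set T}}) d k i :
  is_complex D -> dim_le D d ->
  fnum (sd D k.+1) i = \sum_(m < d.+1) fid i m * fnum (sd D k) m.
Proof.
move=> cD dimD.
have [cDk dimDk] : is_complex (sd D k) /\ dim_le (sd D k) d.
  elim: k => [|k [cDk dimDk]] //=; split; [exact: bary_complex | exact: bary_dim_le].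
exact: fnum_bary.
Qed.

Local Open Scope ring_scope.

Lemma nth_Ftab n d m : (m <= n)%N -> nth 0 (Ftab n d) m = head 0 (Ftab (n - m) d).
Proof. by elim: n m => [|n IH] [|m] //= le_mn; rewrite IH. Qed.

Lemma Fcoef_diag d : Fcoef d d = 1.
Proof. by rewrite /Fcoef subnn. Qed.

Lemma FcoefE i d : (i < d)%N ->
  Fcoef i d = (((d.+1)`!)%:R - ((i.+1)`!)%:R)^-1 *
              \sum_(m < d - i) (fid i (i.+1 + m))%:R * Fcoef (i.+1 + m) d.
Proof.
move=> lt_id; rewrite /Fcoef; case def_n: (d - i)%N => [|n]; first lia.
rewrite /= (_ : d - n.+1 = i)%N; last lia.
congr (_ * _); apply: eq_bigr => m _; rewrite nth_Ftab; last by have := ltn_ord m; lia.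
by congr (_ * head 0 (Ftab _ d)); lia.
Qed.

(* When [mu l = lam] the quotient [B l / 0] is the junk value [0], which is
   harmless because [B l = 0] there. *)
Lemma affine_geometric_rec (R : fieldType) (I : finType) (lam : R) (mu B : I -> R)
    (g : nat -> R) :
  (forall l, mu l = lam -> B l = 0) ->
  (forall k, g k.+1 = lam * g k + \sum_l B l * mu l ^+ k) ->
  forall k, g k = \sum_l B l / (mu l - lam) * mu l ^+ k
                  + (g 0%N - \sum_l B l / (mu l - lam)) * lam ^+ k.
Proof.
move=> Bmu g_rec.
have coefE l : B l / (mu l - lam) * mu l = lam * (B l / (mu l - lam)) + B l.
  have [/[dup] /Bmu -> <-|ne] := eqVneq (mu l) lam; first by rewrite !mul0r mulr0 addr0.
  by field; rewrite subr_eq0.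
elim=> [|k IH].
  by under eq_bigr do rewrite expr0 mulr1; rewrite expr0 mulr1 addrC subrK.
rewrite g_rec IH mulrDr big_distrr addrAC -big_split /=; congr (_ + _).
  by apply: eq_bigr => l _; rewrite exprS [RHS]mulrA coefE; ring.
by rewrite exprS; ring.
Qed.

Section TriangularRecursion.
Variables (d : nat) (f : nat -> nat -> rat).
Hypothesis f_rec : forall k i, f k.+1 i = \sum_(m < d.+1) (fid i m)%:R * f k m.

Local Notation mu j := (((d.+1 - j)`!)%:R : rat).

Lemma f_rec_triangular k i : (i <= d)%N ->
  f k.+1 i = ((i.+1)`!)%:R * f k i
             + \sum_(m < d - i) (fid i (i.+1 + m))%:R * f k (i.+1 + m)%N.
Proof.
move=> le_id; rewrite f_rec -(big_mkord xpredT (fun m => (fid i m)%:R * f k m)).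
rewrite (big_cat_nat (n := i)) //=; last by lia.
rewrite big_nat_cond big1 ?add0r; last first.
  by move=> m /andP [/andP [_ lt_mi] _]; rewrite /fid stirling2_small ?muln0 ?mul0r.
rewrite big_ltn; last by lia.
rewrite /fid stirling2_diag muln1; congr (_ + _).
by rewrite -{1}(add0n i.+1) big_addn big_mkord subSS; apply: eq_bigr => m _; rewrite addnC.
Qed.

Definition row_expansion i (C : nat -> rat) :=
  [/\ forall j, (d - i < j)%N -> C j = 0,
      forall k, f k i = \sum_(j < d.+1) C j * mu j ^+ k
    & C 0%N = f 0%N d * Fcoef i d].

Lemma row_expansion_step i (CC : 'I_(d - i) -> nat -> rat) : (i <= d)%N ->
  (forall m : 'I_(d - i), row_expansion (i.+1 + m)%N (CC m)) -> exists C, row_expansion i C.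
Proof.
move=> le_id CCexp.
set n := (d - i)%N; set lam : rat := mu n.
have lamE : lam = ((i.+1)`!)%:R by rewrite /lam /n; congr (_`!)%:R; lia.
pose B l := \sum_(m < n) (fid i (i.+1 + m))%:R * CC m l.
have B_supp l : (n <= l)%N -> B l = 0.
  move=> le_nl; apply: big1 => m _; have [supp _ _] := CCexp m.
  by rewrite supp ?mulr0 //; have := ltn_ord m; lia.
have g_rec k : f k.+1 i = lam * f k i + \sum_(l < d.+1) B l * mu l ^+ k.
  rewrite f_rec_triangular // -lamE; congr (_ + _).
  rewrite (eq_bigr (fun m : 'I_n => \sum_(l < d.+1) (fid i (i.+1 + m))%:R * (CC m l * mu l ^+ k)));
    last by move=> m _; have [_ -> _] := CCexp m; rewrite big_distrr.
  rewrite exchange_big; apply: eq_bigr => l _; rewrite big_distrl.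
  by apply: eq_bigr => m _ /=; rewrite mulrA.
have Bmu (l : 'I_d.+1) : mu l = lam -> B l = 0.
  move=> /eqP; rewrite eqr_nat => /eqP mu_lam; apply: B_supp; rewrite leqNgt.
  apply/negP => lt_ln; have : ((d.+1 - n)`! < (d.+1 - l)`!)%N by apply: ltn_fact; lia.
  by rewrite mu_lam ltnn.
have := affine_geometric_rec Bmu g_rec.
set X := (f 0%N i - _) => f_exp.
exists (fun l => B l / (mu l - lam) + (if l == n then X else 0)); split.
- move=> l lt_nl; rewrite B_supp ?mul0r ?add0r ?(gtn_eqF lt_nl) //; exact: ltnW.
- move=> k; rewrite f_exp; under [RHS]eq_bigr do rewrite mulrDl; rewrite big_split /=.
  congr (_ + _); rewrite (eq_bigr (fun l : 'I_d.+1 =>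
     if (l == n :> nat) then X * mu l ^+ k else 0)) => [|l _]; last first.
    by case: ifP; rewrite ?mul0r.
  by rewrite -big_mkcond (big_ord1_eq _ (fun j => X * mu j ^+ k)) ltnS leq_subr.
- have [n0|n_gt0] := posnP n.
    rewrite n0 eqxx B_supp ?n0 // mul0r add0r /X big1 => [|l _]; last first.
      by rewrite B_supp ?n0 ?mul0r.
    have -> : i = d by lia.
    by rewrite subr0 Fcoef_diag mulr1.
  rewrite (_ : (0 == n) = false) ?addr0; last by lia.
  rewrite (FcoefE (i := i)); last by lia.
  rewrite /B lamE subn0 mulrCA mulrC; congr (_ * _).
  rewrite big_distrr; apply: eq_bigr => m _.
  by have [_ _ ->] := CCexp m; rewrite mulrCA.
Qed.

Lemma row_expansion_exists i : (i <= d)%N -> exists C, row_expansion i C.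
Proof.
move: {2}(d - i)%N (erefl (d - i)%N) => n; elim/ltn_ind: n i => n IH i def_n le_id.
have /fin_all_exists [CC CCexp] : forall m : 'I_(d - i), exists C, row_expansion (i.+1 + m)%N C.
  by move=> m; apply: (IH (d - (i.+1 + m))%N _ (i.+1 + m)%N) => //; have := ltn_ord m; lia.
exact: row_expansion_step CCexp.
Qed.

End TriangularRecursion.

Theorem lemma2p8 (T : finType) (D : {set {set T}}) (d i : nat) :
  is_complex D -> complex_dim D d -> (i <= d)%N ->
  exists C : nat -> rat,
    (forall k : nat,
       ((fnum (sd D k) i)%:R : rat) =
         \sum_(j < (d - i).+1) C j * (((d.+1 - j)`!)%:R) ^+ k)
    /\ C 0%N = (fnum D d)%:R * Fcoef i d
    /\ (exists M : rat, forall k : nat,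
          `|((fnum (sd D k) i)%:R : rat) - (fnum D d)%:R * Fcoef i d * ((d.+1)`!)%:R ^+ k|
            <= M * ((d`!)%:R) ^+ k).
Proof.
move=> cD /andP [_ dimD] le_id.
pose f k j : rat := (fnum (sd D k) j)%:R.
have f_rec k j : f k.+1 j = \sum_(m < d.+1) (fid j m)%:R * f k m.
  by rewrite /f (fnum_sdS _ _ cD dimD) natr_sum; apply: eq_bigr => m _; rewrite natrM.
have [C [C_supp f_exp C0]] := row_expansion_exists f_rec le_id.
have f_exp' k : f k i = \sum_(j < (d - i).+1) C j * ((d.+1 - j)`!)%:R ^+ k.
  rewrite f_exp [RHS](big_ord_widen d.+1 (fun j => C j * ((d.+1 - j)`!)%:R ^+ k)
    (leq_subr i d : (d - i).+1 <= d.+1)%N).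
  rewrite [RHS]big_mkcond /=; apply: eq_bigr => j _.
  by case: ltnP => // /C_supp ->; rewrite mul0r.
exists C; split; first exact: f_exp'.
split; first exact: C0.
exists (\sum_(j < d - i) `|C j.+1|) => k.
rewrite -/(f k i) f_exp' big_ord_recl -C0 /= subn0 addrAC subrr add0r big_distrl /=.
apply: le_trans (ler_norm_sum _ _ _) _; apply: ler_sum => j _.
rewrite normrM normrX normr_nat ler_wpM2l // -!natrX ler_nat.
by case: k => [|k] //; rewrite leq_exp2r // leq_fact // subSS leq_subr.
Qed.
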